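(* Let $m,n,k$ be positive integers, $A\in\mathbb{R}^{m\times n}$, $x^*\in\mathbb{R}^n$ with support $S^*$ satisfying $1\le|S^*|\le k$, $e\in\mathbb{R}^m$, $y=Ax^*+e$. Let $\mathcal{X}^0\in\mathbb{R}^n$, $\eta>0$, and let $(S^t,x^t,\mathcal{X}^t)_{t\ge0}$ be the sequence generated by SEA. Let $b^t=u^t-\eta A^T(Ax^t-y)$ and $B=\sup_{t\in\mathbb{N}}\|b^t\|_\infty$. If $$B<\frac{\eta}{2k}\min_{i\in S^*}|x^*_i|,$$ then there exists an integer $t_s\le T_{max}$ such that $S^*\subseteq S^{t_s}$, where $$T_{max}=\frac{2k\|\mathcal{X}^0\|_\infty+(k+1)\eta\min_{i\in S^*}|x^*_i|}{\eta\min_{i\in S^*}|x^*_i|-2kB}.$$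
   Context: $S^*=\{i:x^*_i\neq0\}$. For $v\in\mathbb{R}^n$, $\mathrm{largest}_k(v)$ is the set of indices of the $k$ entries of $v$ with largest absolute value (ties broken by selecting the highest indices). For $S\subseteq\{1,\dots,n\}$, $A_S$ is the submatrix of columns indexed by $S$, $v_S$ the restriction of a vector to $S$, $A_S^\dagger$ the Moore–Penrose pseudoinverse of $A_S$. SEA with initialization $\mathcal{X}^0$ and step size $\eta$ generates, for $t=0,1,2,\dots$: $S^t=\mathrm{largest}_k(\mathcal{X}^t)$; $x^t_i=0$ for $i\notin S^t$ and $x^t_{S^t}=A_{S^t}^\dagger y$; $\mathcal{X}^{t+1}=\mathcal{X}^t-\eta A^T(Ax^t-y)$. The oracle direction is $u^t\in\mathbb{R}^n$ with $u^t_i=-\eta x^*_i$ if $i\in S^*\setminus S^t$ and $u^t_i=0$ otherwise. *)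

From HB Require Import structures.
From mathcomp Require Import all_boot all_order all_algebra.
From mathcomp Require Import all_classical all_reals all_analysis.
Set Implicit Arguments. Unset Strict Implicit. Unset Printing Implicit Defensive.
Import Order.TTheory GRing.Theory Num.Theory.
Local Open Scope ring_scope.

Section SEA.
Variable R : realType.

(* Moore–Penrose pseudoinverse: the (unique) matrix satisfying the four
   Penrose equations, picked by classical choice. *)
Definition is_pinv (p q : nat) (M : 'M[R]_(p, q)) (P : 'M[R]_(q, p)) : Prop :=
  [/\ M *m P *m M = M, P *m M *m P = P,
      (M *m P)^T = M *m P & (P *m M)^T = P *m M].

Definition pinv (p q : nat) (M : 'M[R]_(p, q)) : 'M[R]_(q, p) :=
  xget 0 [set P | is_pinv M P].

Variables (m n : nat).

Definition normInf (v : 'cV[R]_n) : R := \big[Num.max/0]_(i < n) `|v i 0|.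

Definition supp (v : 'cV[R]_n) : {set 'I_n} := [set i | v i 0 != 0].

(* min_{i in S} |v_i| (the identity element normInf v is >= every |v_i|,
   so this is the true minimum whenever S is nonempty) *)
Definition minabs (v : 'cV[R]_n) (S : {set 'I_n}) : R :=
  \big[Num.min/normInf v]_(i in S) `|v i 0|.

(* j is ranked strictly before i: larger absolute value, ties broken
   in favour of the higher index *)
Definition beats (v : 'cV[R]_n) (j i : 'I_n) : bool :=
  (`|v i 0| < `|v j 0|) || ((`|v j 0| == `|v i 0|) && (i < j)%N).

Definition largest_k (k : nat) (v : 'cV[R]_n) : {set 'I_n} :=
  [set i | (#|[set j | beats v j i]| < k)%N].

Definition colsel (S : {set 'I_n}) (M : 'M[R]_(m, n)) : 'M[R]_(m, #|S|) :=
  colsub (fun j : 'I_#|S| => enum_val j) M.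

(* the vector x with x_S = z and x_i = 0 outside S *)
Definition embed (S : {set 'I_n}) (z : 'cV[R]_#|S|) : 'cV[R]_n :=
  \col_i \sum_(j < #|S|) (if enum_val j == i then z j 0 else 0).

Variables (k : nat) (A : 'M[R]_(m, n)) (y : 'cV[R]_m) (eta : R).

Definition sea_S (X : 'cV[R]_n) : {set 'I_n} := largest_k k X.
Definition sea_x (X : 'cV[R]_n) : 'cV[R]_n :=
  embed (pinv (colsel (sea_S X) A) *m y).
Definition sea_next (X : 'cV[R]_n) : 'cV[R]_n :=
  X - eta *: (A^T *m (A *m sea_x X - y)).

Definition sea_X (X0 : 'cV[R]_n) (t : nat) : 'cV[R]_n := iter t sea_next X0.

Definition oracle_u (xs : 'cV[R]_n) (S : {set 'I_n}) : 'cV[R]_n :=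
  \col_i (if (i \in supp xs) && (i \notin S) then - eta * xs i 0 else 0).

Definition sea_b (xs X0 : 'cV[R]_n) (t : nat) : 'cV[R]_n :=
  oracle_u xs (sea_S (sea_X X0 t))
  - eta *: (A^T *m (A *m sea_x (sea_X X0 t) - y)).

End SEA.

From HB Require Import structures.
From mathcomp Require Import all_boot all_order all_algebra.
From mathcomp Require Import all_classical all_reals all_analysis.
From mathcomp Require Import lra ring.
Set Implicit Arguments. Unset Strict Implicit. Unset Printing Implicit Defensive.
Import Order.TTheory GRing.Theory Num.Theory.
Local Open Scope ring_scope.

(* Write X^(t+1) = X^t + b^t - u^t.  Outside S* the coordinates only move by
   b^t, so there |X^t_j| <= |X^0|_oo + t B.  Each time a coordinate i of S* is
   missed by S^t it is pushed by eta |x*_i| >= a := eta xmin towards the sign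
   of x*_i, so after N misses its signed value is at least
   N a - |X^0|_oo - t B.  Since |S*| <= k, a missed i is beaten by some j
   outside S*, which caps that signed value by |X^0|_oo + t B; hence i is
   missed at most 1 + 2 (|X^0|_oo + t B) / a times.  While S* is not
   recovered some coordinate of S* is missed at every step, and summing over
   the at most k coordinates of S* gives T a <= k (a + 2 |X^0|_oo + 2 T B). *)

Lemma normr_sgM_le (R : numDomainType) (x z : R) : `|Num.sg x * z| <= `|z|.
Proof. by rewrite normrM normr_sg; case: (x != 0); rewrite ?mul1r ?mul0r. Qed.

Section Coordinates.
Variables (R : realType) (n : nat).
Implicit Types (v : 'cV[R]_n) (S : {set 'I_n}).

Lemma normInf_ge0 v : 0 <= normInf v.
Proof.
by apply: (big_ind (fun x => 0 <= x)) => // x z x0 z0; rewrite le_max x0.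
Qed.

Lemma ler_normInf v i : `|v i 0| <= normInf v.
Proof. by rewrite /normInf (bigD1 i) //= le_max lexx. Qed.

Lemma minabs_le v S i : i \in S -> minabs v S <= `|v i 0|.
Proof. by move=> iS; rewrite /minabs (bigD1 i) //= ge_min lexx. Qed.

Lemma notin_largest_k k v S i : (#|S| <= k)%N -> i \in S ->
  i \notin largest_k k v -> exists2 j, j \notin S & `|v i 0| <= `|v j 0|.
Proof.
move=> Sk iS iNL.
have [/exists_inP[j jNS beats_ji]|] := boolP [exists j in ~: S, beats v j i].
  exists j; first by rewrite inE in jNS.
  by case/orP: beats_ji => [/ltW //|/andP[/eqP -> _]].
rewrite negb_exists_in => /forall_inP beaters_in_S; exfalso.
have beaters_sub : [set j | beats v j i] \subset S :\ i.
  apply/fintype.subsetP => j; rewrite !inE => beats_ji.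
  apply/andP; split.
    by apply: contraTneq beats_ji => ->; rewrite /beats ltxx ltnn andbF.
  by apply: contraLR beats_ji => jNS; apply: beaters_in_S; rewrite inE.
move: iNL; rewrite inE -leqNgt => /leq_trans/(_ (subset_leq_card beaters_sub)).
by move=> /(leq_trans Sk); rewrite (cardsD1 i S) iS add1n ltnn.
Qed.

End Coordinates.

Lemma fine_ereal_sup_range (R : realType) (f : nat -> R) (x : R) :
  let s := ereal_sup (range (fun t => (f t)%:E)) in
  (s < x%:E)%E -> (forall t, f t <= fine s) /\ fine s < x.
Proof.
move=> s s_lt.
have f_le t : ((f t)%:E <= s)%E by apply: ereal_sup_ubound; exists t.
have [r sE] : exists r, s = r%:E.
  case: s s_lt f_le => [r _ _| |]; first by exists r.
  - by [].
  - by move=> _ /(_ 0%N); rewrite leeNy_eq.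
by split=> [t|]; [have := f_le t | move: s_lt]; rewrite sE /= ?lee_fin ?lte_fin.
Qed.

Lemma hit_time_le (R : realType) (P : pred nat) (c D : R) : 0 < D -> 0 <= c ->
  (forall T, (forall t, (t < T)%N -> ~~ P t) -> T%:R * D <= c) ->
  exists t, t%:R <= c / D /\ P t.
Proof.
move=> D0 c0 failure_bound; set T := (Num.truncn (c / D)).+1.
have [/existsP[t Pt]|] := boolP [exists t : 'I_T, P t].
  exists t; split=> //; apply: le_trans (_ : (Num.truncn (c / D))%:R <= _).
    by rewrite ler_nat -ltnS ltn_ord.
  by rewrite truncn_le divr_ge0 // ltW.
rewrite negb_exists => /forallP never; exfalso.
have := failure_bound T (fun t tT => never (Ordinal tT)).
by rewrite -ler_pdivlMr // leNgt truncnS_gt.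
Qed.

Section DriftedIteration.
Variables (R : realType) (n k : nat) (X b : nat -> 'cV[R]_n).
Variables (S0 : {set 'I_n}) (d : 'cV[R]_n) (B a : R).

Let L t := largest_k k (X t).
Let N0 := normInf (X 0%N).

Hypothesis X_succ : forall t i,
  X t.+1 i 0 = X t i 0 + b t i 0 + (if (i \in S0) && (i \notin L t) then d i 0 else 0).
Hypothesis b_le : forall t, normInf (b t) <= B.
Hypothesis S0_le : (#|S0| <= k)%N.
Hypothesis a_ge0 : 0 <= a.
Hypothesis a_le : forall i, i \in S0 -> a <= `|d i 0|.

Definition misses i t : R := \sum_(s < t) if i \notin L s then 1 else 0.

Lemma B_ge0 : 0 <= B.
Proof. exact: le_trans (normInf_ge0 _) (b_le 0%N). Qed.

Lemma norm_b_le t i : `|b t i 0| <= B.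
Proof. exact: le_trans (ler_normInf _ i) (b_le t). Qed.

Lemma norm_X_notin_le j t : j \notin S0 -> `|X t j 0| <= N0 + t%:R * B.
Proof.
move=> jNS0; elim: t => [|t IH]; first by rewrite mul0r addr0 ler_normInf.
rewrite X_succ (negbTE jNS0) addr0 mulrSr.
have := ler_normD (X t j 0) (b t j 0); have := norm_b_le t j; lra.
Qed.

Lemma sgX_ge i t : i \in S0 ->
  misses i t * a - (N0 + t%:R * B) <= Num.sg (d i 0) * X t i 0.
Proof.
move=> iS0; elim: t => [|t IH].
  rewrite /misses big_ord0 !mul0r addr0 add0r.
  have := le_trans (normr_sgM_le (d i 0) _) (ler_normInf (X 0%N) i).
  by rewrite -/N0 ler_norml => /andP[].
rewrite /misses big_ord_recr -/(misses i t) X_succ iS0 /= mulrSr !mulrDr.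
have := le_trans (normr_sgM_le (d i 0) _) (norm_b_le t i).
rewrite ler_norml => /andP[sgb_ge _]; have := a_le iS0.
by case: (i \notin L t); rewrite -?normrEsg ?mulr0 /=; lra.
Qed.

Lemma sgX_le_of_missed i t : i \in S0 -> i \notin L t ->
  Num.sg (d i 0) * X t i 0 <= N0 + t%:R * B.
Proof.
move=> iS0 iNL; have [j jNS0 Xi_le] := notin_largest_k S0_le iS0 iNL.
have := norm_X_notin_le t jNS0; have := normr_sgM_le (d i 0) (X t i 0).
have := ler_norm (Num.sg (d i 0) * X t i 0); lra.
Qed.

Lemma misses_le i t : i \in S0 -> misses i t * a <= a + 2 * (N0 + t%:R * B).
Proof.
move=> iS0; have N0_ge0 : 0 <= N0 := normInf_ge0 _; have B0 := B_ge0.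
elim: t => [|t IH]; first by rewrite /misses big_ord0 !mul0r addr0 addr_ge0 ?mulr_ge0.
rewrite /misses big_ord_recr /= -/(misses i t) -(natr1 t).
have [iNL|iL] := ifPn; last by lra.
by have := sgX_ge t iS0; have := sgX_le_of_missed iS0 iNL; lra.
Qed.

Lemma le_sum_misses T : (forall t, (t < T)%N -> ~~ (S0 \subset L t)) ->
  T%:R <= \sum_(i in S0) misses i T.
Proof.
move=> not_rec; rewrite /misses exchange_big /= -[T in T%:R]card_ord -sumr_const.
apply: ler_sum => t _; have [i iS0 iNL] := fintype.subsetPn (not_rec t (ltn_ord t)).
rewrite (bigD1 i) //= iNL lerDl; apply: sumr_ge0 => j _; by case: ifP.
Qed.

Lemma recovery_time_le T : (forall t, (t < T)%N -> ~~ (S0 \subset L t)) ->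
  T%:R * (a - 2 * k%:R * B) <= k%:R * (a + 2 * N0).
Proof.
move=> not_rec.
have : T%:R * a <= k%:R * (a + 2 * (N0 + T%:R * B)).
  apply: le_trans (ler_wpM2r a_ge0 (le_sum_misses not_rec)) _.
  rewrite mulr_suml; apply: le_trans (ler_sum _ (fun i iS0 => misses_le T iS0)) _.
  rewrite sumr_const -[X in X <= _]mulr_natl ler_wpM2r ?ler_nat //.
  by rewrite addr_ge0 // mulr_ge0 // addr_ge0 ?mulr_ge0 ?normInf_ge0 ?B_ge0.
rewrite -/N0; lra.
Qed.

End DriftedIteration.

Lemma sea_X_succ (R : realType) (m n k : nat) (A : 'M[R]_(m, n)) (y : 'cV[R]_m)
    (eta : R) (xs X0 : 'cV[R]_n) t i :
  let X := sea_X k A y eta X0 in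
  X t.+1 i 0 = X t i 0 + sea_b k A y eta xs X0 t i 0 +
    (if (i \in supp xs) && (i \notin largest_k k (X t)) then (eta *: xs) i 0 else 0).
Proof.
rewrite /= /sea_next /sea_b /oracle_u !mxE.
by case: ifP => _; lra.
Qed.

Theorem theoremC4 (R : realType) (m n k : nat) (A : 'M[R]_(m, n))
  (xs : 'cV[R]_n) (e : 'cV[R]_m) (X0 : 'cV[R]_n) (eta : R) :
  (0 < m)%N -> (0 < n)%N -> (0 < k)%N ->
  (1 <= #|supp xs|)%N -> (#|supp xs| <= k)%N ->
  0 < eta ->
  let y := A *m xs + e in
  let B : \bar R :=
    ereal_sup (range (fun t : nat => (normInf (sea_b k A y eta xs X0 t))%:E)) in
  let xmin := minabs xs (supp xs) in
  (B < (eta / (2 * k%:R) * xmin)%:E)%E ->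
  let Tmax := (2 * k%:R * normInf X0 + (k%:R + 1) * eta * xmin)
              / (eta * xmin - 2 * k%:R * fine B) in
  exists ts : nat, ts%:R <= Tmax /\
    supp xs \subset sea_S k (sea_X k A y eta X0 ts).
Proof.
move=> _ _ k_gt0 _ supp_le eta_gt0 y B xmin B_lt Tmax.
have [b_le Bv_lt] := fine_ereal_sup_range B_lt.
set Bv := fine B in b_le Bv_lt; set a := eta * xmin.
have Bv_ge0 : 0 <= Bv := le_trans (normInf_ge0 _) (b_le 0%N).
have D_gt0 : 0 < a - 2 * k%:R * Bv.
  move: Bv_lt; rewrite mulrAC -/a ltr_pdivlMr ?mulr_gt0 ?ltr0n // mulrC.
  by rewrite subr_gt0.
have a_gt0 : 0 < a by apply: lt_le_trans D_gt0 _; rewrite gerBl !mulr_ge0.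
have a_le i : i \in supp xs -> a <= `|(eta *: xs) i 0|.
  by move=> i_supp; rewrite mxE normrM gtr0_norm // ler_pM2l // minabs_le.
have c_ge0 : 0 <= k%:R * (a + 2 * normInf X0).
  by rewrite mulr_ge0 // addr_ge0 ?(ltW a_gt0) // mulr_ge0 // normInf_ge0.
have [ts [ts_le recovered]] := hit_time_le
  (P := fun t => supp xs \subset sea_S k (sea_X k A y eta X0 t)) D_gt0 c_ge0
  (recovery_time_le (@sea_X_succ _ _ _ k A y eta xs X0) b_le supp_le (ltW a_gt0) a_le).
exists ts; split=> //; apply: le_trans ts_le _.
have -> : Tmax = (k%:R * (a + 2 * normInf X0) + a) / (a - 2 * k%:R * Bv).
  by rewrite /Tmax -/Bv /a; congr (_ / _); ring.
by rewrite ler_pM2r ?invr_gt0 // lerDl ltW.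
Qed.
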